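(* Let $n\ge 0$, $m\ge 1$ and $r\ge 1$ be integers. If $m$ is odd then \[ F_m^{\,n}L_mF_{rm}\;\Big|\;F_{m(r+1)}^{\,n+1}-F_{m(r-1)}^{\,n+1}, \] and if $m$ is even then \[ F_m^{\,n}L_mF_{rm}\;\Big|\;F_{m(r+1)}^{\,n+1}+(-1)^nF_{m(r-1)}^{\,n+1}. \]
   Context: $F_n$ and $L_n$ denote the Fibonacci and Lucas numbers, defined by $F_0=0,F_1=1$, $L_0=2,L_1=1$ and $x_n=x_{n-1}+x_{n-2}$. *)

From mathcomp Require Import all_boot all_order all_algebra.
Set Implicit Arguments. Unset Strict Implicit. Unset Printing Implicit Defensive.
Import Order.TTheory GRing.Theory Num.Theory.

Fixpoint fib (n : nat) : nat :=
  match n with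
  | 0 => 0
  | 1 => 1
  | (n'.+1 as p).+1 => fib p + fib n'
  end.

Fixpoint lucas (n : nat) : nat :=
  match n with
  | 0 => 2
  | 1 => 1
  | (n'.+1 as p).+1 => lucas p + lucas n'
  end.

From mathcomp Require Import all_boot all_order all_algebra.
From mathcomp Require Import ring zify.
Import Order.TTheory GRing.Theory Num.Theory.
Local Open Scope ring_scope.

(* Write r = k + 1.  The identity F_{c+2m} + (-1)^m F_c = L_m F_{c+m} at c = mk
   gives F_{m(r+1)} + (-1)^m F_{m(r-1)} = L_m F_{rm}, and both Fibonacci numbers are
   multiples of F_m because F_m divides F_{mk}.  For multiples x, y of d the
   factorisation x^{n+1} - y^{n+1} = (x - y) * sum_i x^{n-i} y^i exhibits d^n (x - y)
   as a divisor; for m even it is applied to y := -F_{m(r-1)}. *)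

Lemma fibSS k : fib k.+2 = (fib k.+1 + fib k)%N.
Proof. by []. Qed.

Lemma lucasSS k : lucas k.+2 = (lucas k.+1 + lucas k)%N.
Proof. by []. Qed.

Lemma fibD a b : fib (a + b.+1) = (fib a.+1 * fib b.+1 + fib a * fib b)%N.
Proof.
elim/ltn_ind: b a => -[|[|b]] IH a.
- by rewrite addn1 muln1 muln0 addn0.
- by rewrite addn2 /= !muln1.
- rewrite !addnS fibSS -!addnS (IH b.+1) // (IH b) // (fibSS b.+1) (fibSS b).
  lia.
Qed.

Lemma dvdn_fib_mul m k : (fib m %| fib (m * k))%N.
Proof.
case: m => [|m]; first by rewrite mul0n.
elim: k => [|k IHk]; first by rewrite muln0 dvdn0.
rewrite mulnS addnC fibD.
by apply: dvdn_add; [apply: dvdn_mull | apply: dvdn_mulr].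
Qed.

Lemma fib_lucas c b :
  (fib (c + 2 * b))%:Z + (-1) ^+ b * (fib c)%:Z = (fib (c + b))%:Z * (lucas b)%:Z.
Proof.
elim/ltn_ind: b c => -[|[|b]] IH c.
- by rewrite muln0 addn0 expr0 mul1r mulrC -mulr2n -mulr_natl.
- by rewrite muln1 addn2 addn1 fibSS expr1 /= PoszD; ring.
- have IH1 := IH b.+1 (ltnSn _) c.+1.
  have IH2 := IH b (leqnSn _) c.+2.
  rewrite lucasSS PoszD mulrDr.
  have -> : (c + b.+2 = c.+1 + b.+1)%N by lia.
  rewrite -IH1 (_ : (c.+1 + b.+1 = c.+2 + b)%N); last by lia.
  rewrite -IH2 (_ : (c + 2 * b.+2 = (c + 2 * b).+4)%N); last by lia.
  rewrite (_ : (c.+2 + 2 * b = (c + 2 * b).+2)%N); last by lia.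
  rewrite (_ : (c.+1 + 2 * b.+1 = (c + 2 * b).+3)%N); last by lia.
  rewrite (fibSS (c + 2 * b).+2) (fibSS c) !PoszD !exprS; ring.
Qed.

Lemma dvdz_subrXX (d x y : int) n :
  (d %| x)%Z -> (d %| y)%Z -> (d ^+ n * (x - y) %| x ^+ n.+1 - y ^+ n.+1)%Z.
Proof.
move=> /dvdzP[x' ->] /dvdzP[y' ->]; apply/dvdzP.
exists (\sum_(i < n.+1) x' ^+ (n.+1.-1 - i) * y' ^+ i).
by rewrite !exprMn -mulrBl subrXX exprS; ring.
Qed.

Theorem mainTheorem16 (n m r : nat) (hm : (1 <= m)%N) (hr : (1 <= r)%N) :
  (odd m ->
     ((fib m)%:Z ^+ n * (lucas m)%:Z * (fib (r * m))%:Z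
        %| (fib (m * r.+1))%:Z ^+ n.+1 - (fib (m * r.-1))%:Z ^+ n.+1)%Z) /\
  (~~ odd m ->
     ((fib m)%:Z ^+ n * (lucas m)%:Z * (fib (r * m))%:Z
        %| (fib (m * r.+1))%:Z ^+ n.+1 + (-1) ^+ n * (fib (m * r.-1))%:Z ^+ n.+1)%Z).
Proof.
case: r hr => // k _ /=.
set x := (fib (m * k.+2))%:Z; set y := (fib (m * k))%:Z.
have dvd_x : ((fib m)%:Z %| x)%Z by rewrite dvdzE dvdn_fib_mul.
have dvd_y : ((fib m)%:Z %| y)%Z by rewrite dvdzE dvdn_fib_mul.
have lucas_eq : x + (-1) ^+ m * y = (lucas m)%:Z * (fib (k.+1 * m))%:Z.
  rewrite /x /y [RHS]mulrC.
  have -> : (m * k.+2 = m * k + 2 * m)%N by lia.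
  have -> : (k.+1 * m = m * k + m)%N by lia.
  exact: fib_lucas.
rewrite -mulrA -signr_odd in lucas_eq *; split=> [odd_m | even_m].
- rewrite odd_m expr1 mulN1r in lucas_eq.
  by rewrite -lucas_eq; apply: dvdz_subrXX.
- rewrite (negbTE even_m) expr0 mul1r -[y in x + y]opprK in lucas_eq.
  rewrite -lucas_eq (_ : (-1) ^+ n * y ^+ n.+1 = - (- y) ^+ n.+1).
    by apply: dvdz_subrXX; rewrite ?rpredN.
  by rewrite (exprNn y) (exprS (-1 : int)) mulN1r mulNr opprK.
Qed.
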